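(* Let $R$ be a commutative ring and $M$ an $R$-module. The following are equivalent: (1) $M$ is Noetherian; (2) $M$ is uniformly $(R\setminus\mathfrak p)$-Noetherian for every prime ideal $\mathfrak p$ of $R$; (3) $M$ is uniformly $(R\setminus\mathfrak m)$-Noetherian for every maximal ideal $\mathfrak m$ of $R$.
   Context: For a multiplicative subset $S$ of $R$, an $R$-module $M$ is uniformly $S$-Noetherian if there exists a single $s\in S$ such that for every submodule $N$ of $M$ there is a finitely generated submodule $F\subseteq N$ with $sN\subseteq F$. *)

From HB Require Import structures.
From mathcomp Require Import all_boot all_algebra.
Set Implicit Arguments. Unset Strict Implicit. Unset Printing Implicit Defensive.
Import GRing.Theory.
Local Open Scope ring_scope.

Definition is_ideal (R : comPzRingType) (I : R -> Prop) : Prop :=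
  [/\ I 0, (forall a b, I a -> I b -> I (a + b)) & (forall r a, I a -> I (r * a))].

Definition is_prime_ideal (R : comPzRingType) (P : R -> Prop) : Prop :=
  [/\ is_ideal P, ~ P 1 & (forall a b, P (a * b) -> P a \/ P b)].

Definition is_maximal_ideal (R : comPzRingType) (P : R -> Prop) : Prop :=
  [/\ is_ideal P, ~ P 1 &
      (forall J : R -> Prop, is_ideal J -> (forall x, P x -> J x) ->
         (forall x, J x <-> P x) \/ (forall x, J x))].

Definition is_mult_subset (R : comPzRingType) (S : R -> Prop) : Prop :=
  S 1 /\ (forall a b, S a -> S b -> S (a * b)).

Definition is_submodule (R : comPzRingType) (M : lmodType R) (N : M -> Prop) : Prop :=
  [/\ N 0, (forall x y, N x -> N y -> N (x + y)) & (forall (r : R) x, N x -> N (r *: x))].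

Definition span_of (R : comPzRingType) (M : lmodType R) (s : seq M) : M -> Prop :=
  fun x => exists c : 'I_(size s) -> R, x = \sum_(i < size s) c i *: s`_i.

Definition finitely_generated (R : comPzRingType) (M : lmodType R) (N : M -> Prop) : Prop :=
  exists s : seq M, forall x, N x <-> span_of s x.

Definition noetherian_module (R : comPzRingType) (M : lmodType R) : Prop :=
  forall N : M -> Prop, is_submodule N -> finitely_generated N.

Definition uniformly_S_noetherian (R : comPzRingType) (S : R -> Prop) (M : lmodType R) : Prop :=
  exists2 s : R, S s &
    forall N : M -> Prop, is_submodule N ->
      exists F : M -> Prop,
        [/\ is_submodule F, finitely_generated F,
            (forall x, F x -> N x) & (forall x, N x -> F (s *: x))].

From HB Require Import structures.
From mathcomp Require Import all_boot all_algebra.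
From mathcomp Require Import boolp classical_sets.
Set Implicit Arguments. Unset Strict Implicit. Unset Printing Implicit Defensive.
Import GRing.Theory.
Local Open Scope classical_set_scope.
Local Open Scope ring_scope.

(* The scalars s that witness uniform Noetherianity form an ideal of R,
   because a sum of two finitely generated submodules is finitely generated.
   If every maximal ideal m admits such an s outside m, this ideal lies in no
   maximal ideal, so by Zorn's lemma it contains 1, which says exactly that M
   is Noetherian. The converse directions hold with s = 1, and maximal ideals
   are prime. *)

Section Ideals.
Variable R : comPzRingType.

Lemma chain_ideal_union (J : set R) (F : set (set R)) :
  is_ideal J -> (forall X, F X -> is_ideal (J `|` X)) ->
  total_on F subset -> is_ideal (J `|` \bigcup_(X in F) X).
Proof.
move=> [J0 JD JM] FI Ftot.
have common a b : (J `|` \bigcup_(X in F) X) a ->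
    (J `|` \bigcup_(X in F) X) b ->
    (J a /\ J b) \/ exists2 X, F X & (J `|` X) a /\ (J `|` X) b.
  case=> [Ja|[X FX Xa]] [Jb|[Y FY Yb]]; first by left.
  - by right; exists Y => //; split; [left|right].
  - by right; exists X => //; split; [right|left].
  - right; have [XY|YX] := Ftot X Y FX FY.
      by exists Y => //; split; right => //; apply: XY.
    by exists X => //; split; right => //; apply: YX.
have inU X x : F X -> (J `|` X) x -> (J `|` \bigcup_(X in F) X) x.
  by move=> FX [Jx|Xx]; [left|right; exists X].
split; first by left.
- move=> a b Ua Ub; have [[Ja Jb]|[X FX [Xa Xb]]] := common a b Ua Ub.
    by left; apply: JD.
  by have [_ XD _] := FI X FX; apply: (inU X) => //; apply: XD.
- move=> r a [Ja|[X FX Xa]]; first by left; apply: JM.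
  by have [_ _ XM] := FI X FX; apply: (inU X) => //; apply: XM; right.
Qed.

(* Zorn is applied to the sets A with J u A an ideal avoiding 1, so that the
   empty chain is harmless. *)
Lemma exists_maximal_ideal (J : set R) :
  is_ideal J -> ~ J 1 ->
  exists2 m : set R, is_maximal_ideal m & forall x, J x -> m x.
Proof.
move=> Jid J1.
pose P (A : set R) := is_ideal (J `|` A) /\ ~ (J `|` A) 1.
have [A [[Aid A1] Amax]] : exists A, P A /\ forall B, A `<` B -> ~ P B.
  apply: Zorn_bigcup => F FP Ftot; split.
    by apply: chain_ideal_union => // X /FP [].
  by case=> [//|[X /FP [_ X1] XA1]]; apply: X1; right.
exists (J `|` A); last by move=> x; left.
split => // K Kid JAK; have [_ _ KM] := Kid.
have [K1|nK1] := pselect (K 1).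
  by right => x; rewrite -(mulr1 x); apply: KM.
have PK : P K.
  rewrite /P (_ : J `|` K = K) //.
  by apply/funext => x; apply/propext; split=> [[Jx|//]|]; [apply: JAK; left|right].
left => x; split; last exact: JAK.
move=> Kx; right; apply: contrapT => nAx; apply: (Amax K) PK; split.
  by move=> y Ay; apply: JAK; right.
by move=> /(_ x Kx).
Qed.

Lemma maximal_ideal_prime (m : set R) : is_maximal_ideal m -> is_prime_ideal m.
Proof.
move=> [[m0 mD mM] m1 mmax]; split => // a b mab.
have [ma|nma] := pselect (m a); [by left | right].
pose K x := exists r y, m y /\ x = r * a + y.
have Kid : is_ideal K.
  split.
  - by exists 0, 0; rewrite mul0r addr0.
  - move=> x y [r [u [mu ->]]] [r' [v [mv ->]]].
    by exists (r + r'), (u + v); split; [apply: mD | rewrite mulrDl addrACA].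
  - move=> t x [r [u [mu ->]]].
    by exists (t * r), (t * u); split; [apply: mM | rewrite mulrDr mulrA].
have mK x : m x -> K x by exists 0, x; rewrite mul0r add0r.
have [Km|K1] := mmax K Kid mK.
  by exfalso; apply/nma/Km; exists 1, 0; rewrite mul1r addr0.
have [r [y [my Ey]]] := K1 1.
have -> : b = r * (a * b) + b * y.
  by rewrite -{1}[b]mulr1 Ey mulrDr mulrCA (mulrC b a).
by apply: mD; apply: mM.
Qed.

End Ideals.

Section Modules.
Variables (R : comPzRingType) (M : lmodType R).

Lemma span_nil (x : M) : span_of [::] x <-> x = 0.
Proof.
split; first by case=> c ->; rewrite big_ord0.
by move=> ->; exists (fun _ => 0); rewrite big_ord0.
Qed.

Lemma span_cons (a : M) s x :
  span_of (a :: s) x <-> exists r y, span_of s y /\ x = r *: a + y.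
Proof.
split.
  case=> c ->; rewrite big_ord_recl /=.
  exists (c ord0), (\sum_(i < size s) c (lift ord0 i) *: s`_i).
  by split => //; exists (fun i => c (lift ord0 i)).
case=> r [y [[c ->] ->]].
exists (fun i : 'I_(size s).+1 => if unlift ord0 i is Some j then c j else r).
rewrite big_ord_recl /= unlift_none; congr (_ + _).
by apply: eq_bigr => i _; rewrite liftK.
Qed.

Lemma span_cat (s1 s2 : seq M) x :
  span_of (s1 ++ s2) x <->
  exists u v, [/\ span_of s1 u, span_of s2 v & x = u + v].
Proof.
elim: s1 x => [|a s1 IH] x /=.
  split; first by move=> h; exists 0, x; rewrite add0r; split => //; apply/span_nil.
  by case=> u [v [/span_nil -> h ->]]; rewrite add0r.
split.
  case/span_cons=> r [y [/IH [u [v [hu hv ->]]] ->]].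
  by exists (r *: a + u), v; split => //; [apply/span_cons; exists r, u | rewrite addrA].
case=> u [v [/span_cons [r [y [hy ->]]] hv ->]].
apply/span_cons; exists r, (y + v); split; last by rewrite addrA.
by apply/IH; exists y, v.
Qed.

Definition sum_submod (F1 F2 : M -> Prop) (x : M) : Prop :=
  exists u v, [/\ F1 u, F2 v & x = u + v].

Lemma is_submodule_sum F1 F2 :
  is_submodule F1 -> is_submodule F2 -> is_submodule (sum_submod F1 F2).
Proof.
move=> [F10 F1D F1Z] [F20 F2D F2Z]; split.
- by exists 0, 0; rewrite addr0.
- move=> x y [u [v [hu hv ->]]] [u' [v' [hu' hv' ->]]].
  by exists (u + u'), (v + v'); split; [apply: F1D | apply: F2D | rewrite addrACA].
- move=> r x [u [v [hu hv ->]]].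
  by exists (r *: u), (r *: v); split; [apply: F1Z | apply: F2Z | rewrite scalerDr].
Qed.

Lemma finitely_generated_sum F1 F2 :
  finitely_generated F1 -> finitely_generated F2 ->
  finitely_generated (sum_submod F1 F2).
Proof.
move=> [s1 hs1] [s2 hs2]; exists (s1 ++ s2) => x; rewrite span_cat.
by split=> -[u [v [/hs1 hu /hs2 hv ->]]]; exists u, v.
Qed.

Definition uniform_multiplier (t : R) : Prop :=
  forall N : M -> Prop, is_submodule N ->
    exists F : M -> Prop,
      [/\ is_submodule F, finitely_generated F,
          (forall x, F x -> N x) & (forall x, N x -> F (t *: x))].

Lemma uniform_multiplier_ideal : is_ideal uniform_multiplier.
Proof.
split.
- move=> N [N0 _ _]; exists (eq^~ 0); split.
  + split => //; first by move=> x y -> ->; rewrite addr0.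
    by move=> r x ->; rewrite scaler0.
  + by exists [::] => x; rewrite span_nil.
  + by move=> x ->.
  + by move=> x _; rewrite scale0r.
- move=> a b ua ub N Nsub; have [_ ND _] := Nsub.
  have [F1 [F1sub F1fg F1N NF1]] := ua N Nsub.
  have [F2 [F2sub F2fg F2N NF2]] := ub N Nsub.
  exists (sum_submod F1 F2); split.
  + exact: is_submodule_sum.
  + exact: finitely_generated_sum.
  + by move=> x [u [v [hu hv ->]]]; apply: ND; [apply: F1N | apply: F2N].
  + move=> x Nx; exists (a *: x), (b *: x).
    by split; [apply: NF1 | apply: NF2 | rewrite scalerDl].
- move=> r a ua N Nsub; have [F [Fsub Ffg FN NF]] := ua N Nsub.
  have [_ _ FZ] := Fsub.
  by exists F; split => // x /NF /(FZ r); rewrite scalerA.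
Qed.

Lemma uniform_multiplier1 : uniform_multiplier 1 <-> noetherian_module M.
Proof.
split.
  move=> u1 N Nsub; have [F [_ [s hs] FN NF]] := u1 N Nsub.
  by exists s => x; rewrite -hs; split=> [/NF|/FN]; rewrite ?scale1r.
move=> hM N Nsub; exists N; split => //; first exact: hM.
by move=> x; rewrite scale1r.
Qed.

End Modules.

Lemma noetherian_uniformly_S_noetherian (R : comPzRingType) (M : lmodType R)
    (S : R -> Prop) :
  S 1 -> noetherian_module M -> uniformly_S_noetherian S M.
Proof. by move=> S1 /uniform_multiplier1 u1; exists 1. Qed.

Lemma uniformly_maximal_noetherian (R : comPzRingType) (M : lmodType R) :
  (forall m : R -> Prop, is_maximal_ideal m ->
     uniformly_S_noetherian (fun r => ~ m r) M) -> noetherian_module M.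
Proof.
move=> hM; apply/uniform_multiplier1; apply: contrapT => n1.
have [m mmax um] := exists_maximal_ideal (uniform_multiplier_ideal M) n1.
by have [s ms us] := hM m mmax; apply/ms/um.
Qed.

Theorem proposition2p16 (R : comPzRingType) (M : lmodType R) :
  (noetherian_module M <->
   (forall p : R -> Prop, is_prime_ideal p ->
      uniformly_S_noetherian (fun r => ~ p r) M)) /\
  (noetherian_module M <->
   (forall m : R -> Prop, is_maximal_ideal m ->
      uniformly_S_noetherian (fun r => ~ m r) M)).
Proof.
split; split.
- by move=> hM p [_ p1 _]; apply: noetherian_uniformly_S_noetherian.
- by move=> hp; apply: uniformly_maximal_noetherian => m /maximal_ideal_prime /hp.
- by move=> hM m [_ m1 _]; apply: noetherian_uniformly_S_noetherian.
- exact: uniformly_maximal_noetherian.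
Qed.
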